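(* Let $n\ge3$, let $z^\diamond\in\mathbb{R}^n$, and let $\mathcal{M}\subseteq\{1,\dots,n\}$ be a sample set that is a union of twin samples, contains $1$ and $n$, and contains a twin sample in every linear segment of $z^\diamond$. Let $A=\mathbf{I}_{\mathcal{M}}$ and $y=Az^\diamond$ (noiseless). Consider the following algorithm: (1) solve $\min_z\|Dz\|_1$ subject to $Az=y$, obtaining an optimal value $f^\star$ and an optimal solution $z^\star$; (2) define $s\in\{-1,0,+1\}^n$ by setting, for every pair of consecutive twin samples $(i-1,i)$ and $(j,j+1)$ in $\mathcal{M}$ and every $k\in\{i+1,\dots,j-1\}$, $s_k=\mathrm{sign}\big((z^\star_{j+1}-z^\star_j)-(z^\star_i-z^\star_{i-1})\big)$, and $s_k=0$ for all other $k$; (3) return $\arg\min_z s^{\mathsf{T}}z$ subject to $Az=y$ and $\|Dz\|_1\le f^\star$. Then the algorithm returns $z^\diamond$, i.e., it recovers $z^\diamond$ exactly.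
   Context: $D\in\mathbb{R}^{(n-2)\times n}$ is the second-order difference operator, $(Dz)_k=z_k-2z_{k+1}+z_{k+2}$; $\mathbf{I}_{\mathcal{M}}$ consists of the rows of the identity indexed by $\mathcal{M}$. A twin sample is a pair of consecutive indices $\{i,i+1\}\subseteq\mathcal{M}$. The corners of $z^\diamond$ are the indices $i\in\{2,\dots,n-1\}$ with $z^\diamond_{i-1}-2z^\diamond_i+z^\diamond_{i+1}\ne0$; if $c_1<\dots<c_p$ are the corners, $c_0=1$, $c_{p+1}=n$, the linear segments are the index sets $\{c_t,\dots,c_{t+1}\}$, $t=0,\dots,p$; a twin sample lies in a segment if both its indices belong to it. $\mathrm{sign}(0)=0$. *)

(* Indices are 0-based: the paper's index k (1..n) is k-1 here. *)
From HB Require Import structures.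
From mathcomp Require Import all_boot all_order all_algebra.
From mathcomp Require Import reals.
Set Implicit Arguments. Unset Strict Implicit. Unset Printing Implicit Defensive.
Import Order.TTheory GRing.Theory Num.Theory.
Local Open Scope ring_scope.

Section Defs.
Variable R : realType.
Variable n : nat.

Definition ent (z : 'cV[R]_n) (k : nat) : R :=
  if (insub k : option 'I_n) is Some i then z i 0 else 0.

Definition inM (M : {set 'I_n}) (k : nat) : bool :=
  if (insub k : option 'I_n) is Some i then i \in M else false.

Definition twin (M : {set 'I_n}) (i : nat) : bool := inM M i && inM M i.+1.

Definition union_of_twins (M : {set 'I_n}) : Prop :=
  forall k : 'I_n, k \in M -> exists i, twin M i /\ (val k = i \/ val k = i.+1).

Definition Dmat : 'M[R]_(n - 2, n) :=
  \matrix_(k < n - 2, j < n)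
    (if val j == val k then 1 else if val j == (val k).+1 then -2
     else if val j == (val k).+2 then 1 else 0).

Definition norm1 m (v : 'cV[R]_m) : R := \sum_i `|v i 0|.

(* A = I_M : the rows of the identity indexed by M (in increasing order) *)
Definition Amat (M : {set 'I_n}) : 'M[R]_(#|M|, n) :=
  \matrix_(r < #|M|, j < n) (((@enum_val _ (mem M) r) == j)%:R).

Definition corner (z : 'cV[R]_n) (k : nat) : bool :=
  (0 < k)%N && (k < n.-1)%N && (ent z k.-1 - 2 * ent z k + ent z k.+1 != 0).

Definition breakpoint (z : 'cV[R]_n) (k : nat) : bool :=
  (k == 0)%N || (k == n.-1) || corner z k.

(* every linear segment {c_t,..,c_{t+1}} (consecutive breakpoints) contains a twin sample *)
Definition twin_in_every_segment (z : 'cV[R]_n) (M : {set 'I_n}) : Prop :=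
  forall a b : nat, breakpoint z a -> breakpoint z b -> (a < b)%N ->
    (forall c, (a < c < b)%N -> ~~ corner z c) ->
    exists i, [/\ (a <= i)%N, (i.+1 <= b)%N & twin M i].

Definition consec_twins (M : {set 'I_n}) (i j : nat) : Prop :=
  [/\ (0 < i)%N, (i <= j)%N, twin M i.-1, twin M j &
      forall m, (i < m < j)%N -> ~~ inM M m].

Definition sign_vector (M : {set 'I_n}) (zs s : 'cV[R]_n) : Prop :=
  forall k : 'I_n,
    (forall i j, consec_twins M i j -> (i < k < j)%N ->
       s k 0 = Num.sg ((ent zs j.+1 - ent zs j) - (ent zs i - ent zs i.-1)))
    /\ ((~ exists i j, consec_twins M i j /\ (i < k < j)%N) -> s k 0 = 0).

End Defs.

(* Every unsampled index lies in a gap between consecutive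
   twin samples (i-1, i) and (j, j+1); as every linear segment of zd contains a
   twin sample, zd has at most one corner in [i, j], and there its second
   difference equals the slope change of zd across the gap.  The vector u with
   u_c = sign of that slope change on gaps (and sign (D zd)_c elsewhere) has
   |u_c| <= 1, u^T D zd = ||D zd||_1 and (D^T u)_k = 0 off the samples, so zd
   solves step (1) and every z feasible in step (3) has u_c (Dz)_c = |(Dz)_c|.
   Weighting u by q_c = (c - corner)^2 / 2, whose second difference is 1, gives
   g with g^T D zd = 0 and (D^T g)_k = s_k off the samples (the slope change
   only involves sampled values, on which zstar and zd agree).  Hence
   s^T (z - zd) = sum_c q_c |(Dz)_c| >= 0, and equality makes Dz vanish on each
   gap away from its corner, which with the four sampled values forces z = zd. *)

From HB Require Import structures.
From mathcomp Require Import all_boot all_order all_algebra.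
From mathcomp Require Import reals zify ring lra.
From mathcomp Require Import classical_sets.
Import Order.TTheory GRing.Theory Num.Theory.
Local Open Scope ring_scope.
Set Implicit Arguments. Unset Strict Implicit. Unset Printing Implicit Defensive.

Section SecondDifference.
Variable R : realType.

Definition d2 (f : nat -> R) (c : nat) : R := f c.-1 - 2 * f c + f c.+1.

Lemma d2B f g c : d2 (fun m => f m - g m) c = d2 f c - d2 g c.
Proof. by rewrite /d2; ring. Qed.

Definition slope_jump (f : nat -> R) (i j : nat) : R := (f j.+1 - f j) - (f i - f i.-1).

Lemma sum_d2 f i j : (i <= j.+1)%N -> \sum_(i <= c < j.+1) d2 f c = slope_jump f i j.
Proof.
move=> lei; apply: (telescope_sumr_eq (fun c => f c - f c.-1)) => // c _.
by rewrite /d2 /=; ring.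
Qed.

Lemma d2_eq_slope_jump f i j c0 : (i <= c0 <= j)%N ->
  (forall c, (i <= c <= j)%N -> c != c0 -> d2 f c = 0) -> d2 f c0 = slope_jump f i j.
Proof.
move=> /andP[ic0 c0j] d2_0; rewrite -sum_d2; last by lia.
rewrite (bigD1_seq c0) ?mem_index_iota ?iota_uniq //=; last by lia.
rewrite big_seq_cond big1 ?addr0 // => c /andP[]; rewrite mem_index_iota => cij.
by apply: d2_0; lia.
Qed.

Lemma d2_eq0_vanish f a b : f a = 0 -> f a.+1 = 0 ->
  (forall c, (a < c <= b)%N -> d2 f c = 0) -> forall k, (a <= k <= b.+1)%N -> f k = 0.
Proof.
move=> fa fa1 d2_0.
suff vanish2 : forall t, (a + t <= b)%N -> f (a + t)%N = 0 /\ f (a + t)%N.+1 = 0.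
  move=> k /andP[ak kb]; have [-> //|neka] := eqVneq k a.
  have -> : k = (a + (k - a.+1)).+1 by lia.
  by case: (vanish2 (k - a.+1)%N) => //; lia.
elim=> [|t IH] ht; first by rewrite addn0.
have [f0 f1] := IH (ltac:(lia)).
have := d2_0 (a + t)%N.+1 (ltac:(lia)); rewrite /d2 /= f0 f1 addnS.
by split=> //; lra.
Qed.

Lemma d2_half_sqr (a : R) k : (0 < k)%N -> d2 (fun c => (c%:R - a) ^+ 2 / 2) k = 1.
Proof. by case: k => // k _; rewrite /d2 /= -!natr1; field. Qed.

End SecondDifference.

Section DifferenceOperator.
Variables (R : realType) (n : nat).
Local Notation D := (Dmat R n).

Lemma sum_ord_delta m (F : nat -> R) k : (k < m)%N ->
  \sum_(r < m) (val r == k)%:R * F r = F k.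
Proof.
move=> km; rewrite (bigD1 (Ordinal km)) //= eqxx mul1r big1 ?addr0 // => r nekr.
by rewrite -[val r == k]/(r == Ordinal km) (negbTE nekr) mul0r.
Qed.


Lemma ent_ord (z : 'cV[R]_n) (k : 'I_n) : ent z k = z k 0.
Proof. by rewrite /ent valK. Qed.

Lemma DmatE r j : D r j =
  (j == r :> nat)%:R - 2 * (j == r.+1 :> nat)%:R + (j == r.+2 :> nat)%:R.
Proof.
rewrite mxE /=; have [->|_] := eqVneq (j : nat) r.
  have [-> ->] : (r == r.+1 :> nat) = false /\ (r == r.+2 :> nat) = false by split; lia.
  by rewrite /=; ring.
have [->|_] := eqVneq (j : nat) r.+1.
  have -> : (r.+1 == r.+2) = false by lia.
  by rewrite /=; ring.
by case: (j == r.+2 :> nat) => /=; ring.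
Qed.

Lemma Dmat_mulE (z : 'cV[R]_n) (r : 'I_(n - 2)) : (D *m z) r 0 = d2 (ent z) r.+1.
Proof.
rewrite mxE (eq_bigr (fun j : 'I_n => (val j == r)%:R * ent z j
    - 2 * ((val j == r.+1)%:R * ent z j) + (val j == r.+2)%:R * ent z j)).
  by rewrite big_split sumrB -mulr_sumr !sum_ord_delta //; have := ltn_ord r; lia.
by move=> j _; rewrite DmatE ent_ord; ring.
Qed.

(* Row [r] of [D] is centred at index [r.+1]; [Dcol F] pairs it with [F r.+1]. *)
Definition Dcol (F : nat -> R) : 'cV[R]_(n - 2) := \col_(r < n - 2) F r.+1.

Lemma trDcol_mulDmat F (k : 'I_n) : (1 < k < n - 2)%N -> ((Dcol F)^T *m D) 0 k = d2 F k.
Proof.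
move=> k_mid; rewrite mxE (eq_bigr (fun r : 'I_(n - 2) => (val r == k)%:R * F r.+1
    - 2 * ((val r == k.-1)%:R * F r.+1) + (val r == (k - 2)%N)%:R * F r.+1)).
  rewrite big_split sumrB -mulr_sumr !(sum_ord_delta (fun m => F m.+1)); try lia.
  have [-> ->] : k.-1.+1 = k :> nat /\ (k - 2).+1 = k.-1 by split; lia.
  by rewrite /d2 /=; ring.
move=> r _; rewrite DmatE !mxE eq_sym /=.
have -> : (k == r.+1 :> nat) = (r == k.-1 :> nat) by apply/eqP/eqP; lia.
have -> : (k == r.+2 :> nat) = (r == k - 2 :> nat)%N by apply/eqP/eqP; lia.
ring.
Qed.

Lemma Dcol_pairing F (z : 'cV[R]_n) :
  ((Dcol F)^T *m (D *m z)) 0 0 = \sum_(r < n - 2) F r.+1 * d2 (ent z) r.+1.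
Proof. by rewrite mxE; apply: eq_bigr => r _; rewrite Dmat_mulE !mxE. Qed.

End DifferenceOperator.

Arguments Dcol {R n} F.

Section Samples.
Variables (n : nat) (M : {set 'I_n}).

Lemma inM_lt k : inM M k -> (k < n)%N.
Proof. by rewrite /inM; case: insubP => // i _ <-. Qed.

Lemma inM_ord (k : 'I_n) : inM M k = (k \in M).
Proof. by rewrite /inM valK. Qed.

Lemma consec_twins_samples i j : consec_twins M i j ->
  [/\ inM M i.-1, inM M i, inM M j & inM M j.+1].
Proof. by case=> i_gt0 _ /andP[? +] /andP[? ?] _; rewrite prednK. Qed.

Lemma consec_twins_sampled_outside i j m : consec_twins M i j -> inM M m ->
  (m <= i)%N \/ (j <= m)%N.
Proof.
case=> _ _ _ _ no_sample m_sampled; case: (leqP m i) => [|lt_im]; [by left | right].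
by rewrite leqNgt; apply: contraL m_sampled => lt_mj; apply: no_sample; rewrite lt_im.
Qed.

Lemma consec_twins_interior i j k : consec_twins M i j -> (i < k < j)%N -> (1 < k < n - 2)%N.
Proof. by move=> ct; have [_ _ _ /inM_lt] := consec_twins_samples ct; case: ct; lia. Qed.

Definition in_gap c i j := [/\ consec_twins M i j, (i.+2 <= j)%N & (i <= c <= j)%N].

Lemma in_gap_unique c i j i' j' : in_gap c i j -> in_gap c i' j' -> i = i' /\ j = j'.
Proof.
move=> [ct gap_ij c_ij] [ct' gap_ij' c_ij'].
have [s1 s2 s3 _] := consec_twins_samples ct.
have [s1' s2' s3' _] := consec_twins_samples ct'.
have := consec_twins_sampled_outside ct s1'; have := consec_twins_sampled_outside ct s2'.
have := consec_twins_sampled_outside ct s3'; have := consec_twins_sampled_outside ct' s1.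
have := consec_twins_sampled_outside ct' s2; have := consec_twins_sampled_outside ct' s3.
case: ct ct' => [i_gt0 _ _ _ _] [i'_gt0 _ _ _ _]; lia.
Qed.

Definition gap_of c : option (nat * nat) :=
  xget None (fun o => if o is Some (i, j) then in_gap c i j else False).

Lemma gap_of_some c i j : gap_of c = Some (i, j) -> in_gap c i j.
Proof. by rewrite /gap_of; case: xgetP => [o _ + eo|] //; rewrite eo. Qed.

Lemma gap_ofP c i j : in_gap c i j -> gap_of c = Some (i, j).
Proof.
rewrite /gap_of => g; case: xgetP => [[[i' j']|] _ //= g'|/(_ (Some (i, j)))//].
by have [-> ->] := in_gap_unique g g'.
Qed.

Lemma gap_of_interior i j k : consec_twins M i j -> (i < k < j)%N ->
  [/\ gap_of k.-1 = Some (i, j), gap_of k = Some (i, j) & gap_of k.+1 = Some (i, j)].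
Proof. by case=> *; split; apply: gap_ofP; split=> //; lia. Qed.

Hypotheses (twins : union_of_twins M) (first_sampled : inM M 0) (last_sampled : inM M n.-1).

Lemma sampled_twin m : inM M m -> inM M m.+1 \/ (0 < m)%N /\ inM M m.-1.
Proof.
move=> m_sampled; have := @twins (Ordinal (inM_lt m_sampled)); rewrite -inM_ord.
by case/(_ m_sampled)=> t [/andP[st st1] [/= ->|/= ->]]; [left | right].
Qed.

Lemma unsampled_in_gap (k : 'I_n) : k \notin M ->
  exists i j, consec_twins M i j /\ (i < k < j)%N.
Proof.
rewrite -inM_ord => k_unsampled.
have below : exists m, (m <= k)%N && inM M m by exists 0%N; rewrite first_sampled.
have ub : forall m, (m <= k)%N && inM M m -> (m <= k)%N by move=> m /andP[].
have [i /andP[ik si] imax] := ex_maxnP below ub.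
have above : exists m, (k <= m)%N && inM M m.
  by exists n.-1; rewrite last_sampled andbT; have := ltn_ord k; lia.
have [j /andP[kj sj] jmin] := ex_minnP above.
have lt_ik : (i < k)%N by rewrite ltn_neqAle ik andbT; apply: contraNneq k_unsampled => <-.
have lt_kj : (k < j)%N by rewrite ltn_neqAle kj andbT; apply: contraNneq k_unsampled => ->.
have [si1|[i_gt0 si']] := sampled_twin si.
  by have := imax i.+1; rewrite si1 lt_ik => /(_ isT); rewrite ltnn.
have [sj1|[j_gt0 sj']] := sampled_twin sj; last first.
  by have := jmin j.-1; rewrite sj' andbT => /(_ ltac:(lia)); lia.
exists i, j; split; last by rewrite lt_ik.
split; [done | lia | by rewrite /twin si' prednK | by rewrite /twin sj sj1 |].
move=> m /andP[im mj]; apply/negP => sm; case: (leqP m k) => mk.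
  by have := imax m; rewrite sm mk => /(_ isT); lia.
by have := jmin m; rewrite sm andbT => /(_ ltac:(lia)); lia.
Qed.

End Samples.

Section SamplingOperator.
Variables (R : realType) (n : nat) (M : {set 'I_n}).

Lemma Amat_mulE (z : 'cV[R]_n) r : (Amat R M *m z) r 0 = z (enum_val r) 0.
Proof.
rewrite mxE (bigD1 (enum_val r)) //= mxE eqxx mul1r big1 ?addr0 // => j ne.
by rewrite mxE eq_sym (negbTE ne) mul0r.
Qed.

Lemma Amat_mul_eq_sampled (z z' : 'cV[R]_n) :
  Amat R M *m z = Amat R M *m z' -> forall k, k \in M -> z k 0 = z' k 0.
Proof.
move=> eqA k kM; have := congr1 (fun A : 'M[R]_(#|M|, 1) => A (enum_rank_in kM k) 0) eqA.
by rewrite /= !Amat_mulE enum_rankK_in.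
Qed.

Lemma Amat_mul_eq_ent (z z' : 'cV[R]_n) :
  Amat R M *m z = Amat R M *m z' -> forall k, inM M k -> ent z k = ent z' k.
Proof.
move=> eqA k sk; rewrite -[k]/(val (Ordinal (inM_lt sk))) !ent_ord.
by apply: (Amat_mul_eq_sampled eqA); rewrite -inM_ord.
Qed.

Lemma mulmxBr00 m (a : 'rV[R]_m) (x y : 'cV[R]_m) :
  (a *m (x - y)) 0 0 = (a *m x) 0 0 - (a *m y) 0 0.
Proof. by rewrite !mxE -sumrB; apply: eq_bigr => k _; rewrite !mxE mulrBr. Qed.

Lemma mulmx_eq_on_support m (w w' : 'rV[R]_m) (x : 'cV[R]_m) :
  (forall k, x k 0 != 0 -> w 0 k = w' 0 k) -> w *m x = w' *m x.
Proof.
move=> eq_supp; apply/matrixP => a b; rewrite !mxE !ord1; apply: eq_bigr => k _.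
by have [->|/eq_supp ->] := eqVneq (x k 0) 0; rewrite ?mulr0.
Qed.

End SamplingOperator.

Section Corners.
Variables (R : realType) (n : nat) (zd : 'cV[R]_n) (M : {set 'I_n}).
Hypothesis segments_sampled : twin_in_every_segment zd M.

Lemma corner_d2 k : (0 < k < n.-1)%N -> corner zd k = (d2 (ent zd) k != 0).
Proof. by rewrite /corner => ->. Qed.

Lemma gap_corner_unique i j c1 c2 : consec_twins M i j -> (i.+2 <= j)%N ->
  (i <= c1 <= j)%N -> (i <= c2 <= j)%N ->
  d2 (ent zd) c1 != 0 -> d2 (ent zd) c2 != 0 -> c1 = c2.
Proof.
move=> ct gap_ij; have [_ _ _ sj1] := consec_twins_samples ct.
have j_lt := inM_lt sj1; have [i_gt0 _ _ _ _] := ct.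
wlog lt12 : c1 c2 / (c1 < c2)%N.
  move=> W h1 h2 n1 n2; case: (ltngtP c1 c2) => [lt|lt|//]; first exact: W.
  by apply/esym; apply: W.
move=> /andP[ic1 _] /andP[_ c2j] n1 n2; exfalso.
have c2_corner : corner zd c2 by rewrite corner_d2 //; lia.
have ex : exists m, (c1 < m)%N && corner zd m by exists c2; rewrite lt12 c2_corner.
have [b /andP[c1b b_corner] bmin] := ex_minnP ex.
have bc2 : (b <= c2)%N by apply: bmin; rewrite lt12 c2_corner.
have [|//|//|m /andP[c1m mb]|t [c1t tb /andP[st st1]]] := @segments_sampled c1 b.
- by rewrite /breakpoint corner_d2 ?n1 ?orbT //; lia.
- by rewrite /breakpoint b_corner !orbT.
- by apply/negP => m_corner; have := bmin m; rewrite c1m m_corner => /(_ isT); lia.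
have := consec_twins_sampled_outside ct st; have := consec_twins_sampled_outside ct st1.
lia.
Qed.

End Corners.

Section Certificate.
Variables (R : realType) (n : nat) (zd : 'cV[R]_n) (M : {set 'I_n}).
Hypothesis segments_sampled : twin_in_every_segment zd M.

Definition gap_corner i j : nat := xget i (fun c => (i <= c <= j)%N /\ d2 (ent zd) c != 0).

Lemma gap_cornerP i j : consec_twins M i j -> (i.+2 <= j)%N ->
  [/\ (i <= gap_corner i j <= j)%N,
      forall c, (i <= c <= j)%N -> c != gap_corner i j -> d2 (ent zd) c = 0 &
      d2 (ent zd) (gap_corner i j) = slope_jump (ent zd) i j].
Proof.
move=> ct gap_ij.
suff [c_ij others0] : (i <= gap_corner i j <= j)%N /\
    forall c, (i <= c <= j)%N -> c != gap_corner i j -> d2 (ent zd) c = 0.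
  by split=> //; apply: d2_eq_slope_jump.
rewrite /gap_corner; case: xgetP => [c _ [c_ij c_nz]|no_corner].
  split=> // c' c'_ij; apply: contraNeq => c'_nz.
  by apply/eqP; apply: (gap_corner_unique segments_sampled ct).
split=> [|c c_ij _]; first by rewrite leqnn; lia.
by apply/eqP; apply: contra_notT (no_corner c) => c_nz.
Qed.

Definition cert_sign c : R :=
  if gap_of M c is Some (i, j) then Num.sg (slope_jump (ent zd) i j) else Num.sg (d2 (ent zd) c).

Definition cert_weight c : R :=
  if gap_of M c is Some (i, j) then (c%:R - (gap_corner i j)%:R) ^+ 2 / 2 else 0.

Lemma cert_sign_d2 c : cert_sign c * d2 (ent zd) c = `|d2 (ent zd) c|.
Proof.
rewrite /cert_sign; case E: (gap_of M c) => [[i j]|]; last by rewrite normrEsg.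
have [ct gap_ij c_ij] := gap_of_some E; have [_ others0 corner_jump] := gap_cornerP ct gap_ij.
have [->|ne] := eqVneq c (gap_corner i j); first by rewrite -corner_jump normrEsg.
by rewrite others0 // mulr0 normr0.
Qed.

Lemma cert_sign_le1 c : `|cert_sign c| <= 1.
Proof. by rewrite /cert_sign; case: (gap_of M c) => [[i j]|]; rewrite normr_sg lern1 leq_b1. Qed.

Lemma cert_weight_ge0 c : 0 <= cert_weight c.
Proof. by rewrite /cert_weight; case: (gap_of M c) => [[i j]|] //; rewrite divr_ge0 ?sqr_ge0. Qed.

Lemma cert_weight_d2 c : cert_weight c * d2 (ent zd) c = 0.
Proof.
rewrite /cert_weight; case E: (gap_of M c) => [[i j]|]; last by rewrite mul0r.
have [ct gap_ij c_ij] := gap_of_some E; have [_ others0 _] := gap_cornerP ct gap_ij.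
have [->|ne] := eqVneq c (gap_corner i j); first by rewrite subrr expr0n /= !mul0r.
by rewrite others0 // mulr0.
Qed.

Lemma cert_weight_eq0 c i j : in_gap M c i j -> cert_weight c = 0 -> c = gap_corner i j.
Proof.
move=> g; rewrite /cert_weight (gap_ofP g) => /eqP.
by rewrite mulf_eq0 invr_eq0 pnatr_eq0 orbF sqrf_eq0 subr_eq0 eqr_nat => /eqP.
Qed.

Lemma cert_sign_trD (k : 'I_n) i j : consec_twins M i j -> (i < k < j)%N ->
  ((Dcol cert_sign)^T *m Dmat R n) 0 k = 0.
Proof.
move=> ct k_ij; have [e1 e2 e3] := gap_of_interior ct k_ij.
by rewrite trDcol_mulDmat ?(consec_twins_interior ct k_ij) // /d2 /cert_sign e1 e2 e3; ring.
Qed.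

Lemma cert_weight_trD (k : 'I_n) i j : consec_twins M i j -> (i < k < j)%N ->
  ((Dcol (fun c => cert_sign c * cert_weight c))^T *m Dmat R n) 0 k =
  Num.sg (slope_jump (ent zd) i j).
Proof.
move=> ct k_ij; have [e1 e2 e3] := gap_of_interior ct k_ij.
have k_gt0 : (0 < k)%N by lia.
rewrite trDcol_mulDmat ?(consec_twins_interior ct k_ij) //.
rewrite -[RHS]mulr1 -(d2_half_sqr (gap_corner i j)%:R k_gt0).
rewrite /d2 /cert_sign /cert_weight e1 e2 e3 /=.
ring.
Qed.

End Certificate.

Section Recovery.
Variables (R : realType) (n : nat) (zd : 'cV[R]_n) (M : {set 'I_n}).
Hypotheses (twins : union_of_twins M) (first_sampled : inM M 0) (last_sampled : inM M n.-1).
Hypothesis segments_sampled : twin_in_every_segment zd M.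

Local Notation D := (Dmat R n).
Local Notation feasible z := (Amat R M *m z = Amat R M *m zd).
Local Notation u := (cert_sign zd M).
Local Notation w := (cert_weight zd M).

Lemma feasible_diff_supp z k : feasible z -> (z - zd) k 0 != 0 -> k \notin M.
Proof.
move=> feas; rewrite !mxE subr_eq0; apply: contraNN => kM.
by rewrite (Amat_mul_eq_sampled feas).
Qed.

Lemma cert_sign_pairing z : feasible z ->
  \sum_(r < n - 2) u r.+1 * d2 (ent z) r.+1 = norm1 (D *m zd).
Proof.
move=> feas.
have : (Dcol u)^T *m D *m (z - zd) = 0 *m (z - zd).
  apply: mulmx_eq_on_support => k /(feasible_diff_supp feas) /unsampled_in_gap.
  case/(_ twins first_sampled last_sampled)=> i [j [ct k_ij]].
  by rewrite (cert_sign_trD zd ct k_ij) mxE.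
rewrite mul0mx -mulmxA !mulmxBr => /eqP; rewrite subr_eq0 => /eqP/matrixP/(_ 0 0).
rewrite !Dcol_pairing => ->; apply: eq_bigr => r _.
by rewrite Dmat_mulE cert_sign_d2.
Qed.

Lemma cert_sign_term_le (z : 'cV[R]_n) (r : 'I_(n - 2)) :
  u r.+1 * d2 (ent z) r.+1 <= `|d2 (ent z) r.+1|.
Proof. by rewrite (le_trans (ler_norm _)) // normrM ler_piMl ?cert_sign_le1. Qed.

Lemma l1_lower_bound z : feasible z -> norm1 (D *m zd) <= norm1 (D *m z).
Proof.
move=> feas; rewrite -(cert_sign_pairing feas); apply: ler_sum => r _.
by rewrite Dmat_mulE cert_sign_term_le.
Qed.

Lemma cert_sign_tight z : feasible z -> norm1 (D *m z) <= norm1 (D *m zd) ->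
  forall r : 'I_(n - 2), u r.+1 * d2 (ent z) r.+1 = `|d2 (ent z) r.+1|.
Proof.
move=> feas tight r.
have slack_ge0 (r' : 'I_(n - 2)) : true -> 0 <= `|d2 (ent z) r'.+1| - u r'.+1 * d2 (ent z) r'.+1.
  by rewrite subr_ge0 cert_sign_term_le.
have slack_sum0 : \sum_(r' < n - 2) (`|d2 (ent z) r'.+1| - u r'.+1 * d2 (ent z) r'.+1) = 0.
  apply/eqP; rewrite eq_le sumr_ge0 // andbT sumrB (cert_sign_pairing feas) subr_le0.
  by under eq_bigr do rewrite -Dmat_mulE.
by apply/eqP; rewrite eq_sym -subr_eq0 (psumr_eq0P slack_ge0 slack_sum0).
Qed.

Lemma slope_jump_sampled z i j : feasible z -> consec_twins M i j ->
  slope_jump (ent z) i j = slope_jump (ent zd) i j.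
Proof.
move=> feas ct; have [s1 s2 s3 s4] := consec_twins_samples ct.
by rewrite /slope_jump !(Amat_mul_eq_ent feas).
Qed.

Lemma sign_vector_gain zstar s z : feasible zstar -> sign_vector M zstar s ->
  feasible z -> norm1 (D *m z) <= norm1 (D *m zd) ->
  (s^T *m z) 0 0 - (s^T *m zd) 0 0 = \sum_(r < n - 2) w r.+1 * `|d2 (ent z) r.+1|.
Proof.
move=> feas_star sv feas tight.
have E : s^T *m (z - zd) = (Dcol (fun c => u c * w c))^T *m (D *m (z - zd)).
  rewrite mulmxA; apply: mulmx_eq_on_support => k /(feasible_diff_supp feas) /unsampled_in_gap.
  case/(_ twins first_sampled last_sampled)=> i [j [ct k_ij]].
  rewrite (cert_weight_trD zd ct k_ij) mxE (proj1 (sv k) i j ct k_ij).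
  by rewrite -(slope_jump_sampled feas_star ct).
rewrite -mulmxBr00 E (mulmxBr D) mulmxBr00 !Dcol_pairing.
rewrite [X in _ - X]big1 ?subr0 => [|r _]; last first.
  by rewrite -mulrA (cert_weight_d2 segments_sampled) mulr0.
apply: eq_bigr => r _.
by rewrite -(cert_sign_tight feas tight) (mulrC (u _)) -mulrA.
Qed.

Lemma d2_eq0_off_corner (z : 'cV[R]_n) i j c :
  (forall r : 'I_(n - 2), w r.+1 * `|d2 (ent z) r.+1| = 0) ->
  in_gap M c i j -> c != gap_corner zd i j -> d2 (ent z) c = 0.
Proof.
move=> w0 g ne; have [ct _ /andP[ic cj]] := g.
have [_ _ _ /inM_lt j_lt] := consec_twins_samples ct; have [i_gt0 _ _ _ _] := ct.
have c_lt : (c.-1 < n - 2)%N by lia.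
have := w0 (Ordinal c_lt); rewrite /= prednK; last lia.
move/eqP; rewrite mulf_eq0 normr_eq0 => /orP[/eqP/(cert_weight_eq0 g) eq_c|/eqP //].
by rewrite eq_c eqxx in ne.
Qed.

Lemma weighted_d2_eq0_recovers z : feasible z ->
  (forall r : 'I_(n - 2), w r.+1 * `|d2 (ent z) r.+1| = 0) -> z = zd.
Proof.
move=> feas w0; apply/matrixP => k b; rewrite ord1 -!ent_ord.
have [kM|/unsampled_in_gap] := boolP (k \in M).
  by rewrite !ent_ord (Amat_mul_eq_sampled feas).
case/(_ twins first_sampled last_sampled) => i [j [ct k_ij]].
have [s1 s2 s3 s4] := consec_twins_samples ct; have [i_gt0 _ _ _ _] := ct.
have gap_ij : (i.+2 <= j)%N by lia.
have [cz_ij d2zd_off _] := gap_cornerP segments_sampled ct gap_ij.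
pose x m := ent z m - ent zd m.
have x_sampled m : inM M m -> x m = 0 by move=> sm; rewrite /x (Amat_mul_eq_ent feas) ?subrr.
have d2x_off c : (i <= c <= j)%N -> c != gap_corner zd i j -> d2 x c = 0.
  by move=> c_ij ne; rewrite d2B (d2_eq0_off_corner w0 _ ne) ?d2zd_off ?subrr //; split.
have d2x0 c : (i <= c <= j)%N -> d2 x c = 0.
  move=> c_ij; have [->|] := eqVneq c (gap_corner zd i j); last exact: d2x_off.
  by rewrite (d2_eq_slope_jump cz_ij d2x_off) /slope_jump !x_sampled // !subrr.
suff : x k = 0 by move/eqP; rewrite subr_eq0 => /eqP.
apply: (d2_eq0_vanish (f := x) (a := i.-1) (b := j)).
- exact: x_sampled.
- by rewrite prednK // x_sampled.
- by move=> c c_ij; apply: d2x0; lia.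
- lia.
Qed.

End Recovery.

Theorem corollary3 (R : realType) (n : nat) (zd : 'cV[R]_n) (M : {set 'I_n}) :
  (3 <= n)%N ->
  union_of_twins M ->
  inM M 0 -> inM M n.-1 ->
  twin_in_every_segment zd M ->
  forall zstar : 'cV[R]_n,
    (* step (1): zstar is an optimal solution of min ||Dz||_1 s.t. Az = y *)
    Amat R M *m zstar = Amat R M *m zd ->
    (forall z : 'cV[R]_n, Amat R M *m z = Amat R M *m zd ->
       norm1 (Dmat R n *m zstar) <= norm1 (Dmat R n *m z)) ->
  forall s : 'cV[R]_n,
    (* step (2) *)
    sign_vector M zstar s ->
    (* step (3): zd is the unique minimizer of s^T z s.t. Az = y, ||Dz||_1 <= f* *)
    (Amat R M *m zd = Amat R M *m zd /\
     norm1 (Dmat R n *m zd) <= norm1 (Dmat R n *m zstar)) /\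
    (forall z : 'cV[R]_n, Amat R M *m z = Amat R M *m zd ->
       norm1 (Dmat R n *m z) <= norm1 (Dmat R n *m zstar) ->
       z != zd -> (s^T *m zd) 0 0 < (s^T *m z) 0 0).
Proof.
(* The argument does not need [3 <= n]. *)
move=> _ twins first last segs zstar feas_star opt s sv.
have fstar : norm1 (Dmat R n *m zstar) = norm1 (Dmat R n *m zd).
  by apply/eqP; rewrite eq_le opt // (l1_lower_bound twins first last segs feas_star).
split; first by rewrite fstar.
move=> z feas le_z z_ne; rewrite fstar in le_z.
rewrite -subr_gt0 (sign_vector_gain twins first last segs feas_star sv feas le_z).
have term_ge0 (r : 'I_(n - 2)) : true -> 0 <= cert_weight zd M r.+1 * `|d2 (ent z) r.+1|.
  by rewrite mulr_ge0 ?cert_weight_ge0.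
rewrite lt_def sumr_ge0 // andbT; apply: contra z_ne => /eqP sum0; apply/eqP.
apply: (weighted_d2_eq0_recovers twins first last segs feas) => r.
exact: (psumr_eq0P term_ge0 sum0).
Qed.
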